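(* Let $p$ be an odd prime with $3 \mid (p-1)$. Then there exists an MDS $(3p,\,10)_{p}$ symbol-pair code, i.e., a code $\mathcal{C}\subseteq \mathbb{F}_p^{3p}$ with minimum symbol-pair distance $d_p(\mathcal{C})=10$ and $|\mathcal{C}| = p^{3p-10+2}$.
   Context: For a vector $\mathbf{x}=(x_0,\dots,x_{n-1})\in\mathbb{F}_q^n$ (indices taken modulo $n$), the symbol-pair distance between $\mathbf{x},\mathbf{y}\in\mathbb{F}_q^n$ is $d_p(\mathbf{x},\mathbf{y})=|\{i\in\mathbb{Z}_n : (x_i,x_{i+1})\neq(y_i,y_{i+1})\}|$. The minimum symbol-pair distance of a code $\mathcal{C}\subseteq\mathbb{F}_q^n$ is $d_p(\mathcal{C})=\min\{d_p(\mathbf{x},\mathbf{y}) : \mathbf{x},\mathbf{y}\in\mathcal{C},\ \mathbf{x}\neq\mathbf{y}\}$. Any code of length $n$ over $\mathbb{F}_q$ with minimum symbol-pair distance $d_p$ (where $2\le d_p\le n$) satisfies the Singleton-type bound $|\mathcal{C}|\le q^{n-d_p+2}$; a code attaining equality is called an MDS symbol-pair code. An $(n,d_p)_q$ symbol-pair code is a code of length $n$ over $\mathbb{F}_q$ with minimum symbol-pair distance $d_p$. *)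

From mathcomp Require Import all_boot all_order all_algebra.
Set Implicit Arguments. Unset Strict Implicit. Unset Printing Implicit Defensive.

(* Words of length n over an alphabet F: finite functions 'I_n -> F.
   Indices are taken modulo n: the successor of i is ordS i = (i+1) mod n. *)
Definition word (F : finType) (n : nat) := {ffun 'I_n -> F}.

Definition pair_dist (F : finType) (n : nat) (x y : {ffun 'I_n -> F}) : nat :=
  #|[set i : 'I_n | (x i, x (ordS i)) != (y i, y (ordS i))]|.

Definition min_pair_dist_eq (F : finType) (n : nat)
    (C : {set {ffun 'I_n -> F}}) (d : nat) : Prop :=
  (exists x y, [/\ x \in C, y \in C, x != y & pair_dist x y = d]) /\
  (forall x y, x \in C -> y \in C -> x != y -> d <= pair_dist x y).

(* The code is the kernel of eight parity checks on F_p^(3p), position i being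
   evaluated at i mod p: in each residue class of positions mod 3 the moments of
   order 0 and 1 vanish, and the whole word has vanishing moments of order 2
   and 3.  By the Chinese remainder theorem the evaluation is injective on each
   residue class, so a Vandermonde argument shows that a nonzero codeword meets
   each class in 0 or at least 3 positions, and in at least 5 if it lives in a
   single class.  A pair at a position i = s (mod 3) is nonzero as soon as the
   symbol at i or at i + 1 is, so class s of the pair support dominates classes
   s and s + 1 of the support, and counting gives pair weight at least 10.  The
   only tight configuration, two classes of three positions each, one shifted
   from the other, is ruled out by the moments of order 2 and 3, using 3 <> 0
   in F_p.  The bound forbids nonzero codewords supported on eight consecutive
   positions, so the checks are independent and |C| = p^(3p-8); the
   coefficients of (1 - X^3)^4 give a codeword of pair weight exactly 10. *)

From mathcomp Require Import all_boot all_order all_algebra.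
From mathcomp Require Import zify ring.

Set Implicit Arguments.
Unset Strict Implicit.
Unset Printing Implicit Defensive.

Import GRing.Theory.

Section VanishingMoments.
Local Open Scope ring_scope.
Variables (F : fieldType) (I : finType).

(* Evaluate [v] against the polynomial vanishing on [T] minus one point. *)
Lemma vanishing_moments_eq0 (v x : I -> F) (T : {set I}) (m : nat) :
    (forall i, v i != 0 -> i \in T) -> {in T &, injective x} -> (#|T| <= m)%N ->
    (forall k, (k < m)%N -> \sum_i v i * x i ^+ k = 0) ->
  forall i, v i = 0.
Proof.
move=> suppT x_inj card_T moments_eq0 i0.
have [i0T|] := boolP (i0 \in T); last by apply: contraNeq => /suppT.
pose P := \prod_(j in T :\ i0) ('X - (x j)%:P).
have size_P : (size P <= m)%N.
  by move: card_T; rewrite (cardsD1 i0 T) i0T /P -big_enum size_prod_XsubC -cardE.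
have P_root i : i != i0 -> v i * P.[x i] = 0.
  move=> ne; have [/suppT iT|/negPn/eqP->] := boolP (v i != 0); last by rewrite mul0r.
  by rewrite horner_prod (bigD1 i) ?in_setD1 ?ne //= hornerXsubC subrr mul0r mulr0.
have P_i0 : P.[x i0] != 0.
  rewrite horner_prod; apply/prodf_neq0 => j; rewrite in_setD1 => /andP[ne jT].
  by rewrite hornerXsubC subr_eq0; apply: contra ne => /eqP/x_inj-> //.
have : \sum_i v i * P.[x i] = 0.
  under eq_bigr do rewrite horner_coef mulr_sumr.
  rewrite exchange_big big1 //= => k _.
  under eq_bigr do rewrite mulrCA.
  by rewrite -mulr_sumr moments_eq0 ?mulr0 // (leq_trans (ltn_ord k)).
rewrite (bigD1 i0) //= big1 ?addr0 => [/eqP|]; last exact: P_root.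
by rewrite mulf_eq0 (negbTE P_i0) orbF => /eqP.
Qed.

End VanishingMoments.

Lemma exists_ordS_entry n (A : {set 'I_n}) a b :
  a \in A -> b \notin A -> exists2 i, i \notin A & ordS i \in A.
Proof.
move=> aA bA.
have iter_ordS k : val (iter k (@ordS n) b) = (b + k) %% n.
  elim: k => [|k IH] /=; first by rewrite addn0 modn_small.
  by rewrite IH -addn1 modnDml -addnA addn1.
suff [k] : exists k, iter k (@ordS n) b \in A.
  elim: k => [|k IH]; first by rewrite /= (negbTE bA).
  by have [/IH //|kA] := boolP (iter k (@ordS n) b \in A); exists (iter k (@ordS n) b).
exists (a + (n - b)); suff -> : iter (a + (n - b)) (@ordS n) b = a by [].
apply: val_inj; rewrite iter_ordS.
have b_lt := ltn_ord b; have a_lt := ltn_ord a.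
by rewrite addnCA subnKC 1?ltnW // modnDr modn_small.
Qed.

Lemma card_le_size n (A : {set 'I_n}) (s : seq nat) :
  (forall i : 'I_n, i \in A -> val i \in s) -> #|A| <= size s.
Proof.
move=> As; rewrite cardE -(size_map val).
apply: uniq_leq_size; first by rewrite map_inj_uniq ?enum_uniq //; apply: val_inj.
by move=> x /mapP [i]; rewrite mem_enum => /As iA ->.
Qed.

Section PairSupport.
Variables (n : nat) (V : zmodType).
Implicit Type d : 'I_n -> V.

Definition supp d := [set i | d i != 0%R].
Definition pair_supp d := [set i | (d i, d (ordS i)) != (0, 0)%R].

Lemma pair_suppE d : pair_supp d = supp d :|: @ordS n @^-1: supp d.
Proof. by apply/setP => i; rewrite !inE xpair_eqE negb_and. Qed.

Lemma subset_supp_pair d : supp d \subset pair_supp d.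
Proof. by rewrite pair_suppE subsetUl. Qed.

Lemma card_pair_supp_le d : #|pair_supp d| <= #|supp d| + #|supp d|.
Proof.
by rewrite pair_suppE -[in X in _ <= _ + X](card_preimset _ (@ordS_inj n)) leq_card_setU.
Qed.

Lemma card_supp_lt_pair d : 0 < #|supp d| < n -> #|supp d| < #|pair_supp d|.
Proof.
case/andP=> /card_gt0P [a ad] d_lt; apply: proper_card.
rewrite properE subset_supp_pair /=.
have /card_gt0P [b] : 0 < #|~: supp d| by rewrite cardsCs setCK card_ord subn_gt0.
rewrite inE => bd; have [i id Si_d] := exists_ordS_entry ad bd.
apply/subsetPn; exists i => //.
by rewrite pair_suppE; apply/setUP; right; rewrite inE.
Qed.

Lemma card_pair_supp_prefix d m :
  (forall i : 'I_n, m <= i -> d i = 0%R) -> #|pair_supp d| <= m.+1.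
Proof.
move=> d0; have -> : m.+1 = size (n.-1 :: iota 0 m) by rewrite /= size_iota.
have lt_m (j : 'I_n) : d j != 0%R -> j < m by rewrite ltnNge; apply: contra => /d0 ->.
apply: card_le_size => i; rewrite pair_suppE !inE mem_iota add0n.
case/orP => [/lt_m -> | /lt_m /=]; first by rewrite orbT.
have [i1_n|n_le _] := ltnP i.+1 n; last by apply/orP; left; have := ltn_ord i; lia.
by rewrite modn_small // => /ltnW ->; rewrite orbT.
Qed.

End PairSupport.

Lemma pair_dist_supp (F : finZmodType) n (x y : {ffun 'I_n -> F}) :
  pair_dist x y = #|pair_supp (x - y)%R|.
Proof. by apply: eq_card => i; rewrite !inE !xpair_eqE !ffunE !subr_eq0. Qed.

Lemma supp_eq0 (V : zmodType) n (X : {ffun 'I_n -> V}) : (supp X == set0) = (X == 0%R).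
Proof.
apply/eqP/eqP => [X0 | ->]; last by apply/setP => i; rewrite !inE ffunE eqxx.
by apply/ffunP => i; rewrite ffunE; apply/eqP; have := in_set0 i; rewrite -X0 inE => /negbFE.
Qed.

Section Mod3Classes.
Variable n : nat.
Implicit Type A : {set 'I_n}.

Definition mod3_class A s := A :&: [set i : 'I_n | i %% 3 == s].

Lemma card_mod3_classes A :
  #|A| = #|mod3_class A 0| + #|mod3_class A 1| + #|mod3_class A 2|.
Proof.
rewrite -(cardsID [set i : 'I_n | i %% 3 == 0] A).
rewrite -(cardsID [set i : 'I_n | i %% 3 == 1] (A :\: _)) addnA.
congr (_ + _ + _); apply: eq_card => i; rewrite !inE;
  have : i %% 3 < 3 by rewrite ltn_mod.
all: by case: (i %% 3) => [|[|[|]]] //; rewrite ?andbT ?andbF.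
Qed.

Hypothesis n_mod3 : 3 %| n.

Lemma ordS_mod3 (i : 'I_n) : ordS i %% 3 = i.+1 %% 3.
Proof. by rewrite /= modn_dvdm. Qed.

Lemma mod3_class_preim_ordS A s : s < 3 ->
  mod3_class (@ordS n @^-1: A) s = @ordS n @^-1: mod3_class A ((s + 1) %% 3).
Proof.
move=> s_lt; apply/setP => i.
by rewrite !inE ordS_mod3 -[i.+1]addn1 eqn_modDr (modn_small s_lt).
Qed.

Lemma card_mod3_class_pair_succ (V : zmodType) (d : 'I_n -> V) s : s < 3 ->
  #|mod3_class (supp d) ((s + 1) %% 3)| <= #|mod3_class (pair_supp d) s|.
Proof.
move=> s_lt; rewrite -(card_preimset _ (@ordS_inj n)) -mod3_class_preim_ordS //.
by rewrite subset_leq_card // pair_suppE setSI // subsetUr.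
Qed.

End Mod3Classes.

Section ParityChecks.
Local Open Scope ring_scope.
Variable p : nat.
Hypotheses (p_pr : prime p) (p_gt3 : (3 < p)%N).
Local Notation vec := {ffun 'I_(3 * p) -> 'F_p}.

Let p_gt4 : (4 < p)%N.
Proof. by rewrite ltn_neqAle p_gt3 andbT; apply: contraTneq p_pr => <-. Qed.

Definition pt (i : 'I_(3 * p)) : 'F_p := i%:R.

Definition moment (c : vec) k := \sum_i c i * pt i ^+ k.

Definition mod3_part (s : nat) (c : vec) : vec :=
  [ffun i : 'I_(3 * p) => if (i %% 3 == s)%N then c i else 0].

Definition shift (c : vec) : vec := [ffun i => c (ordS i)].

Definition syndrome (c : vec) : {ffun 'I_8 -> 'F_p} :=
  [ffun j : 'I_8 => [:: moment (mod3_part 0 c) 0; moment (mod3_part 0 c) 1;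
                        moment (mod3_part 1 c) 0; moment (mod3_part 1 c) 1;
                        moment (mod3_part 2 c) 0; moment (mod3_part 2 c) 1;
                        moment c 2; moment c 3]`_j].

Definition code : {set vec} := [set c | syndrome c == 0].

Lemma momentD c c' k : moment (c + c') k = moment c k + moment c' k.
Proof. by rewrite /moment -big_split; apply: eq_bigr => i _; rewrite ffunE mulrDl. Qed.

Lemma momentB c c' k : moment (c - c') k = moment c k - moment c' k.
Proof. by rewrite /moment -sumrB; apply: eq_bigr => i _; rewrite !ffunE mulrBl. Qed.

Lemma mod3_partB s c c' : mod3_part s (c - c') = mod3_part s c - mod3_part s c'.
Proof. by apply/ffunP => i; rewrite !ffunE; case: ifP; rewrite ?subr0. Qed.

Lemma syndromeB c c' : syndrome (c - c') = syndrome c - syndrome c'.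
Proof.
apply/ffunP => j; rewrite !ffunE; have := ltn_ord j.
by case: (nat_of_ord j) => [|[|[|[|[|[|[|[|k]]]]]]]] //= _; rewrite ?mod3_partB momentB.
Qed.

Lemma syndrome_eq0P c :
  syndrome c = 0 <->
  [/\ forall s k, (s < 3)%N -> (k < 2)%N -> moment (mod3_part s c) k = 0,
      moment c 2 = 0 & moment c 3 = 0].
Proof.
split => [/ffunP S0 | [parts m2 m3]].
  have S j : (j < 8)%N -> syndrome c (inord j) = 0 by move=> j_lt; rewrite S0 ffunE.
  split; [| by have := S 6%N isT; rewrite ffunE inordK
           | by have := S 7%N isT; rewrite ffunE inordK].
  move=> s k s_lt k_lt; have /S : (2 * s + k < 8)%N by lia.
  rewrite ffunE inordK; last by lia.
  by move: s_lt k_lt; case: s => [|[|[|]]] //= _; case: k => [|[|]].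
apply/ffunP => j; rewrite !ffunE; have := ltn_ord j.
by case: (nat_of_ord j) => [|[|[|[|[|[|[|[|k]]]]]]]] //= _; rewrite ?parts.
Qed.

Lemma pt_ordS (i : 'I_(3 * p)) : pt (ordS i) = pt i + 1.
Proof.
rewrite /pt /= -(Fp_nat_mod p_pr (i.+1 %% (3 * p))) modn_dvdm ?dvdn_mull //.
by rewrite Fp_nat_mod // mulrSr.
Qed.

Lemma pt_inj_mod3 (i j : 'I_(3 * p)) : (i %% 3 = j %% 3)%N -> pt i = pt j -> i = j.
Proof.
move=> ij_mod3 /(congr1 val); rewrite /= !val_Fp_nat // => ij_modp.
have coprime3p : coprime 3 p by rewrite prime_coprime // dvdn_prime2 //; lia.
apply: ord_inj; rewrite -(modn_small (ltn_ord i)) -(modn_small (ltn_ord j)).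
by apply/eqP; rewrite chinese_remainder // ij_mod3 ij_modp !eqxx.
Qed.

Lemma mod3_class_vanish (X : vec) s m :
    (forall i, X i != 0 -> (i %% 3 == s)%N) -> (#|supp X| <= m)%N ->
    (forall k, (k < m)%N -> moment X k = 0) ->
  X = 0.
Proof.
move=> X_mod3 card_X moments_X; apply/ffunP => i; rewrite ffunE.
apply: (vanishing_moments_eq0 (T := supp X) _ _ card_X moments_X) => [j|j k].
  by rewrite inE.
by rewrite !inE => /X_mod3/eqP jm /X_mod3/eqP km; apply: pt_inj_mod3; rewrite jm km.
Qed.

Lemma supp_mod3_part s c : supp (mod3_part s c) = mod3_class (supp c) s.
Proof. by apply/setP => i; rewrite !inE ffunE; case: ifP; rewrite ?eqxx ?andbT ?andbF. Qed.

Lemma supp_shift c : supp (shift c) = @ordS _ @^-1: supp c.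
Proof. by apply/setP => i; rewrite !inE ffunE. Qed.

Lemma mod3_part_eq0 s c : (mod3_part s c == 0) = (#|mod3_class (supp c) s| == 0%N).
Proof. by rewrite -supp_eq0 supp_mod3_part cards_eq0. Qed.

Lemma mod3_part_sum s c : (s < 3)%N ->
  c = mod3_part s c + mod3_part ((s + 1) %% 3) c + mod3_part ((s + 2) %% 3) c.
Proof.
move=> s_lt; apply/ffunP => i; rewrite !ffunE.
have : (i %% 3 < 3)%N by rewrite ltn_mod.
by case: s s_lt => [|[|[|]]] // _; case: (i %% 3)%N => [|[|[|]]] //= _;
  rewrite ?addr0 ?add0r.
Qed.

Lemma moment_mod3_part_succ s c k : (s < 3)%N ->
  moment (mod3_part ((s + 1) %% 3) c) k =
  \sum_(j < k.+1) moment (mod3_part s (shift c)) j *+ 'C(k, j).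
Proof.
move=> s_lt; rewrite {1}/moment (reindex_inj (@ordS_inj _)) /=.
under eq_bigr => i _ do rewrite pt_ordS exprD1n mulr_sumr.
rewrite exchange_big; apply: eq_bigr => j _; rewrite /moment -sumrMnl.
apply: eq_bigr => i _; rewrite -mulrnAr !ffunE ordS_mod3 ?dvdn_mulr //.
by rewrite -[i.+1]addn1 eqn_modDr (modn_small s_lt).
Qed.

Lemma moment0 k : moment 0 k = 0.
Proof. by rewrite /moment big1 // => i _; rewrite ffunE mul0r. Qed.

Lemma mod3_class_card_eq0 c s m :
    (forall k, (k < m)%N -> moment (mod3_part s c) k = 0) ->
    (#|mod3_class (supp c) s| <= m)%N ->
  #|mod3_class (supp c) s| = 0%N.
Proof.
move=> moments card_le; apply/eqP; rewrite -mod3_part_eq0; apply/eqP.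
apply: (mod3_class_vanish (s := s) (m := m)) => // [i|]; last by rewrite supp_mod3_part.
by rewrite ffunE; case: (i %% 3 =P s)%N; rewrite ?eqxx.
Qed.

Lemma natr3_neq0 : 3%:R != 0 :> 'F_p.
Proof.
by apply/eqP => /(congr1 (fun x : 'F_p => nat_of_ord x)); rewrite val_Fp_nat // modn_small.
Qed.

Section PairWeight.
Variable d : vec.
Hypothesis d_checks : syndrome d = 0.
Local Notation A s := #|mod3_class (supp d) s|.
Local Notation P s := #|mod3_class (pair_supp d) s|.

Let d_parts s k : (s < 3)%N -> (k < 2)%N -> moment (mod3_part s d) k = 0.
Proof. by have [+ _ _] := (syndrome_eq0P d).1 d_checks; apply. Qed.

Let d_moment2 : moment d 2 = 0.
Proof. by have [] := (syndrome_eq0P d).1 d_checks. Qed.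

Let d_moment3 : moment d 3 = 0.
Proof. by have [] := (syndrome_eq0P d).1 d_checks. Qed.

Lemma mod3_class_gap s : (s < 3)%N -> A s = 0%N \/ (3 <= A s)%N.
Proof.
move=> s_lt; have [|A_le] := leqP 3 (A s); [by right | left].
by apply: (mod3_class_card_eq0 (m := 2)) => // k /d_parts->.
Qed.

Lemma lonely_mod3_class s : (s < 3)%N ->
  A ((s + 1) %% 3)%N = 0%N -> A ((s + 2) %% 3)%N = 0%N -> A s = 0%N \/ (5 <= A s)%N.
Proof.
move=> s_lt A1 A2; have [|A_le] := leqP 5 (A s); [by right | left].
have /eqP part1 : mod3_part ((s + 1) %% 3) d == 0 by rewrite mod3_part_eq0 A1.
have /eqP part2 : mod3_part ((s + 2) %% 3) d == 0 by rewrite mod3_part_eq0 A2.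
have d_part : d = mod3_part s d by rewrite {1}(mod3_part_sum d s_lt) part1 part2 !addr0.
apply: (mod3_class_card_eq0 (m := 4)) => // -[|[|[|[|]]]] // _;
  by [apply: d_parts | rewrite -d_part].
Qed.

(* [W] is class [s + 1] of [d] moved back by one position onto class [s];
   the relations come from expanding [(pt i + 1) ^+ k]. *)
Lemma two_mod3_classes_moments s : (s < 3)%N -> A ((s + 2) %% 3)%N = 0%N ->
  let V := mod3_part s d in let W := mod3_part s (shift d) in
  [/\ moment W 0 = 0, moment W 1 = 0, moment V 2 + moment W 2 = 0
    & moment V 3 + moment W 3 + moment W 2 *+ 3 = 0].
Proof.
move=> s_lt A2 V W.
have succ_moment k : moment (mod3_part ((s + 1) %% 3) d) k =
    \sum_(j < k.+1) moment W j *+ 'C(k, j) by apply: moment_mod3_part_succ.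
have /eqP part2 : mod3_part ((s + 2) %% 3) d == 0 by rewrite mod3_part_eq0 A2.
have d_moment k : moment d k = moment V k + \sum_(j < k.+1) moment W j *+ 'C(k, j).
  by rewrite {1}(mod3_part_sum d s_lt) part2 addr0 momentD succ_moment.
have succ_lt : ((s + 1) %% 3 < 3)%N by rewrite ltn_mod.
have mW0 : moment W 0 = 0.
  have := d_parts (k := 0%N) succ_lt isT.
  by rewrite succ_moment big_ord_recr big_ord0 /= add0r.
have mW1 : moment W 1 = 0.
  have := d_parts (k := 1%N) succ_lt isT.
  by rewrite succ_moment !big_ord_recr big_ord0 /= mW0 !add0r.
split => //.
  by move: d_moment2; rewrite d_moment !big_ord_recr big_ord0 /= mW0 mW1 !mul0rn binn !add0r.
move: d_moment3; rewrite d_moment !big_ord_recr big_ord0 /= mW0 mW1 !mul0rn binn !add0r.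
by rewrite (_ : 'C(3, 2) = 3)%N // addrA addrAC.
Qed.

(* Otherwise class [s] of the pair support is [T], so [V] and [W] both live on
   [T]: three vanishing moments kill [V + W], whence [3 * moment W 2 = 0], and
   then [W] itself, although [W] has three nonzero entries. *)
Lemma pair_mod3_class_gt3 s : (s < 3)%N ->
  A ((s + 2) %% 3)%N = 0%N -> A s = 3%N -> A ((s + 1) %% 3)%N = 3%N -> (3 < P s)%N.
Proof.
move=> s_lt A2 A0 A1; rewrite ltnNge; apply/negP => P_le3.
have [mW0 mW1 mVW2 mVW3] := two_mod3_classes_moments s_lt A2.
set V := mod3_part s d in mVW2 mVW3; set W := mod3_part s (shift d) in mW0 mW1 mVW2 mVW3.
set T := mod3_class (supp d) s.
have P_eq : mod3_class (pair_supp d) s = T.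
  by apply/esym/eqP; rewrite eqEcard setSI ?subset_supp_pair //= A0.
have suppV : supp V \subset T by rewrite supp_mod3_part.
have suppW : supp W \subset T.
  by rewrite -P_eq supp_mod3_part supp_shift pair_suppE setSI // subsetUr.
have card_suppW : #|supp W| = 3%N.
  rewrite supp_mod3_part supp_shift mod3_class_preim_ordS ?dvdn_mulr //.
  by rewrite card_preimset //; apply: ordS_inj.
have T_mod3 (X : vec) : supp X \subset T -> forall i, X i != 0 -> (i %% 3 == s)%N.
  by move=> /subsetP XT i Xi; have := XT i; rewrite !inE Xi => /(_ isT) /andP[].
have card_le3 (X : vec) : supp X \subset T -> (#|supp X| <= 3)%N.
  by move=> XT; rewrite (leq_trans (subset_leq_card XT)) ?A0.
have suppVW : supp (V + W) \subset T.
  apply: subset_trans (_ : supp V :|: supp W \subset T); last by rewrite subUset suppV.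
  apply/subsetP => i; rewrite !inE ffunE; apply: contraR.
  by rewrite negb_or !negbK => /andP[/eqP-> /eqP->]; rewrite addr0.
have VW0 : V + W = 0.
  apply: (mod3_class_vanish (s := s) (m := 3)); [exact: T_mod3 | exact: card_le3 |].
  by case=> [|[|[|]]] // _; rewrite momentD ?mW0 ?mW1 ?addr0 // /V d_parts.
have mW2 : moment W 2 = 0.
  move: mVW3; rewrite -momentD VW0 moment0 add0r -mulr_natr => /eqP.
  by rewrite mulf_eq0 (negbTE natr3_neq0) orbF => /eqP.
have W0 : W = 0.
  apply: (mod3_class_vanish (s := s) (m := 3)); [exact: T_mod3 | exact: card_le3 |].
  by case=> [|[|[|]]].
by move/eqP: W0; rewrite -supp_eq0 -cards_eq0 card_suppW.
Qed.

Local Open Scope nat_scope.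

Lemma pair_weight_ge10 : d != 0%R -> 10 <= #|pair_supp d|.
Proof.
move=> d_neq0.
have n_mod3 : 3 %| 3 * p := dvdn_mulr p (dvdnn 3).
have S_gt0 : 0 < #|supp d| by rewrite lt0n cards_eq0 supp_eq0.
have S_le : #|supp d| <= #|pair_supp d| by apply/subset_leq_card/subset_supp_pair.
have S_lt : #|supp d| < 3 * p -> #|supp d| < #|pair_supp d|.
  by move=> S_lt; apply: card_supp_lt_pair; rewrite S_gt0.
move: S_gt0 S_le S_lt; rewrite (card_mod3_classes (supp d)) (card_mod3_classes (pair_supp d)).
have le_same s : A s <= P s by apply/subset_leq_card/setSI/subset_supp_pair.
have l00 := le_same 0; have l11 := le_same 1; have l22 := le_same 2.
have l10 : A 1 <= P 0 := card_mod3_class_pair_succ n_mod3 d (isT : 0 < 3).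
have l21 : A 2 <= P 1 := card_mod3_class_pair_succ n_mod3 d (isT : 1 < 3).
have l02 : A 0 <= P 2 := card_mod3_class_pair_succ n_mod3 d (isT : 2 < 3).
have n_ge10 : 10 <= 3 * p by lia.
have [A0|A0] := mod3_class_gap (isT : 0 < 3);
have [A1|A1] := mod3_class_gap (isT : 1 < 3);
have [A2|A2] := mod3_class_gap (isT : 2 < 3).
- by lia.
- by have := lonely_mod3_class (isT : 2 < 3) A0 A1; lia.
- by have := lonely_mod3_class (isT : 1 < 3) A2 A0; lia.
- by have : A 1 = 3 -> A 2 = 3 -> 3 < P 1 := pair_mod3_class_gt3 (isT : 1 < 3) A0; lia.
- by have := lonely_mod3_class (isT : 0 < 3) A1 A2; lia.
- by have : A 2 = 3 -> A 0 = 3 -> 3 < P 2 := pair_mod3_class_gt3 (isT : 2 < 3) A1; lia.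
- by have : A 0 = 3 -> A 1 = 3 -> 3 < P 0 := pair_mod3_class_gt3 (isT : 0 < 3) A2; lia.
- by lia.
Qed.

End PairWeight.

(* The coefficients of [(1 - X^3)^4]: a fourth difference with step 3, which
   kills the moments of order less than 4. *)
Definition witness_coefs : seq 'F_p := [:: 1; 0; 0; -4; 0; 0; 6; 0; 0; -4; 0; 0; 1].

Definition witness : vec := [ffun i : 'I_(3 * p) => witness_coefs`_i].

Lemma witness_supp i : witness i != 0 -> val i \in [:: 0; 3; 6; 9; 12]%N.
Proof.
rewrite ffunE; case: i => k _ /=.
by do 13![case: k => [|k]; first by rewrite /= ?eqxx]; rewrite /= nth_nil eqxx.
Qed.

Lemma witness_moment k : moment witness k = \sum_(i < 13) witness_coefs`_i * i%:R ^+ k.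
Proof.
rewrite (big_ord_widen _ (fun i => witness_coefs`_i * i%:R ^+ k) (_ : 13 <= 3 * p)%N);
  last by lia.
rewrite big_mkcond /=.
apply: eq_bigr => i _; rewrite ffunE; case: ltnP => // i_ge.
by rewrite nth_default ?mul0r.
Qed.

Lemma witness_in_code : witness \in code.
Proof.
have w_mod3 i : witness i != 0 -> (i %% 3 = 0)%N.
  by move/witness_supp/(allP (isT : all (fun k => k %% 3 == 0) [:: 0; 3; 6; 9; 12])%N)/eqP.
have part_w s i : mod3_part s witness i = if s == 0%N then witness i else 0.
  rewrite ffunE; have [->|/w_mod3->] := eqVneq (witness i) 0; first by rewrite !if_same.
  by rewrite eq_sym.
have moment_part s k :
    moment (mod3_part s witness) k = if s == 0%N then moment witness k else 0.
  rewrite /moment; under eq_bigr do rewrite part_w.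
  by case: (s == 0%N) => //; rewrite big1 // => i _; rewrite mul0r.
have w_moments k : (k < 4)%N -> moment witness k = 0.
  rewrite witness_moment !big_ord_recr big_ord0 /=.
  by case: k => [|[|[|[|]]]] // _; ring.
rewrite inE; apply/eqP/syndrome_eq0P; split; try exact: w_moments.
by move=> s k _ k_lt; rewrite moment_part w_moments ?if_same //; lia.
Qed.

Lemma syndrome0 : syndrome 0 = 0.
Proof. by have := syndromeB 0 0; rewrite !subrr. Qed.

Lemma witness_neq0 : witness != 0.
Proof.
have pos0 : (0 < 3 * p)%N by lia.
by apply/eqP => /ffunP/(_ (Ordinal pos0)); rewrite !ffunE /= => /eqP; rewrite oner_eq0.
Qed.

Lemma pair_weight_witness : #|pair_supp witness| = 10%N.
Proof.
have w_syndrome : syndrome witness = 0 by have := witness_in_code; rewrite inE => /eqP.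
apply/eqP; rewrite eqn_leq pair_weight_ge10 ?andbT ?witness_neq0 //.
apply: leq_trans (card_pair_supp_le witness) _.
have : (#|supp witness| <= 5)%N.
  by apply: (card_le_size (s := [:: 0; 3; 6; 9; 12]%N)) => i; rewrite inE => /witness_supp.
by lia.
Qed.

(* [psi] is injective since a nonzero difference vanishing from position 8 on
   has pair weight at most 9; by cardinality it is onto, and [code] is the fibre
   of syndrome 0. *)
Lemma card_code : #|code| = (p ^ (3 * p - 8))%N.
Proof.
have le8 : (8 <= 3 * p)%N by lia.
pose tail (c : vec) : {ffun 'I_(3 * p - 8) -> 'F_p} :=
  [ffun j => c (cast_ord (subnKC le8) (rshift 8 j))].
pose psi c := (syndrome c, tail c).
have psi_inj : injective psi.
  move=> x y [S_eq /ffunP T_eq]; apply/eqP; rewrite -subr_eq0; apply: contraT => xy.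
  have tail_eq (i : 'I_(3 * p)) : (8 <= i)%N -> (x - y) i = 0.
    move=> i_ge; have j_lt : (i - 8 < 3 * p - 8)%N by have := ltn_ord i; lia.
    have ij : cast_ord (subnKC le8) (rshift 8 (Ordinal j_lt)) = i.
      by apply: val_inj => /=; lia.
    by have := T_eq (Ordinal j_lt); rewrite !ffunE ij => ->; rewrite subrr.
  have := card_pair_supp_prefix tail_eq.
  have := pair_weight_ge10 _ xy; rewrite syndromeB S_eq subrr => /(_ erefl).
  by move=> ge /(leq_trans ge).
have psi_onto : psi @: setT = setT.
  apply/eqP; rewrite eqEcard subsetT card_imset // !cardsT card_prod !card_ffun.
  by rewrite !card_ord Fp_cast // -expnD subnKC /= ?leqnn.
rewrite -(card_imset _ psi_inj).
have -> : psi @: code = setX [set 0 : {ffun 'I_8 -> 'F_p}] setT.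
  apply/setP => -[a b]; rewrite !inE andbT /=.
  apply/imsetP/idP => [[c c_code [-> _]] | /eqP a0]; first by rewrite inE in c_code.
  have : (a, b) \in psi @: setT by rewrite psi_onto inE.
  by case/imsetP => c _ [Sa Tb]; exists c; [rewrite inE -Sa a0 | rewrite Sa Tb].
by rewrite cardsX cards1 cardsT card_ffun !card_ord Fp_cast // mul1n.
Qed.

End ParityChecks.

Theorem theorem1 (p : nat) :
  prime p -> odd p -> 3 %| p.-1 ->
  exists C : {set {ffun 'I_(3 * p) -> 'F_p}},
    min_pair_dist_eq C 10 /\ #|C| = p ^ (3 * p - 10 + 2).
Proof.
move=> p_pr p_odd p3.
have p_gt3 : 3 < p.
  have p_neq2 : p != 2 by apply: contraTneq p_odd => ->.
  have p_neq3 : p != 3 by apply: contraTneq p3 => ->.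
  by have := prime_gt1 p_pr; lia.
exists (code p); split; last by rewrite card_code //; congr (_ ^ _); lia.
split.
  exists (witness p), 0%R; rewrite pair_dist_supp subr0 pair_weight_witness //.
  by split; rewrite ?witness_neq0 ?witness_in_code // inE syndrome0.
move=> x y; rewrite !inE pair_dist_supp => /eqP x_code /eqP y_code xy.
by apply: pair_weight_ge10; rewrite ?syndromeB ?x_code ?y_code ?subrr ?subr_eq0.
Qed.
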